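(* Let $S$ be a numerical semigroup, let $u\in\mathrm U(\mathrm{Betti}(S))$ and $\Lambda=\{b\in\mathrm{Betti}(S): b\le_S u\}$. Then for every $s\in S$ and every $z\in\mathrm B(s;\Lambda)$ there exist $w\in\mathrm I_s(S)$ and $x_1,\dots,x_t\in\mathrm I(\Lambda)$ with $z=w+x_1+\cdots+x_t$, and $w$ together with the multiset $\{x_1,\dots,x_t\}$ is uniquely determined by $z$. Moreover, for every $s\in S$, $$|\mathrm B(s;\Lambda)|=\sum_{j=0}^{q_s}|\mathrm B(s-ju;\Lambda\setminus\{u\})|\binom{\mathrm i(u)+j-1}{j},$$ where $q_s$ is the largest integer with $q_su\le_S s$.
   Context: A numerical semigroup $S$ is a submonoid of $(\mathbb N,+)$ with finite complement, minimally generated by $\{n_1,\dots,n_e\}$. Write $a\le_S b$ if $b-a\in S$. Let $\varphi:\mathbb N^e\to S$, $\varphi(a)=\sum_ia_in_i$; $\mathrm Z(s)=\varphi^{-1}(s)$. $\nabla_s$ is the graph on $\mathrm Z(s)$ with distinct $x,y$ adjacent iff $x\cdot y\ne0$; $s$ is a Betti element if $\nabla_s$ is disconnected; $\mathrm{Betti}(S)$ is the set of Betti elements. For a poset $(X,\le)$, $\mathrm U(X)=\{x\in X: \{y\in X:y\le x\}\text{ is totally ordered}\}$; here $X=(\mathrm{Betti}(S),\le_S)$. A factorization $z\in\mathrm Z(s)$ is isolated if $z\cdot x=0$ for all $x\in\mathrm Z(s)\setminus\{z\}$; $\mathrm I(t)$ is the set of isolated factorizations of $t$, $\mathrm i(t)=|\mathrm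 I(t)|$, and $\mathrm I(\Lambda)=\bigcup_{t\in\Lambda}\mathrm I(t)$. $\mathrm I_s(S)$ is the set of $z\in\mathbb N^e$ such that $\varphi(z)$ has exactly one factorization. For $\Lambda\subseteq S$ and $s\in S$, $\mathrm B(s;\Lambda)=\{w+x_1+\cdots+x_l\in\mathrm Z(s): w\in\mathrm I_s(S),\ l\ge0,\ x_1,\dots,x_l\in\mathrm I(\Lambda)\}$ (with $\mathrm I(\emptyset)=\emptyset$). *)

From mathcomp Require Import all_boot all_order.
From mathcomp Require Import finmap.
From mathcomp Require Import boolp classical_sets cardinality.
From Stdlib Require Import Relation_Operators.
Set Implicit Arguments. Unset Strict Implicit. Unset Printing Implicit Defensive.

(* A numerical semigroup S is represented by its minimal generators
   n_0, ..., n_{e-1} (n : 'I_e -> nat).  Factorizations are vectors in N^e. *)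
Definition fact (e : nat) := {ffun 'I_e -> nat}.

Definition phi e (n : 'I_e -> nat) (a : fact e) : nat := \sum_(i < e) a i * n i.

Definition inS e (n : 'I_e -> nat) (s : nat) : Prop := exists a : fact e, phi n a = s.

(* n_0..n_{e-1} minimally generate a numerical semigroup:
   finite complement, and no n_i lies in the monoid generated by the others *)
Definition numsg_mingens e (n : 'I_e -> nat) : Prop :=
  (exists F, forall m, F <= m -> inS n m) /\
  (forall i : 'I_e, ~ (exists a : fact e, a i = 0 /\ phi n a = n i)).

Definition leS e (n : 'I_e -> nat) (a b : nat) : Prop := a <= b /\ inS n (b - a).

Definition Z e (n : 'I_e -> nat) (s : nat) : set (fact e) := [set a | phi n a = s].

Definition dot e (x y : fact e) : nat := \sum_(i < e) x i * y i.

Definition fadd e (x y : fact e) : fact e := [ffun i => x i + y i].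
Definition fzero e : fact e := [ffun => 0].
Definition fsum e (l : seq (fact e)) : fact e := foldr (@fadd e) (@fzero e) l.

Definition nabla_edge e (n : 'I_e -> nat) (s : nat) (x y : fact e) : Prop :=
  Z n s x /\ Z n s y /\ x <> y /\ dot x y <> 0.

Definition nabla_connected e (n : 'I_e -> nat) (s : nat) : Prop :=
  forall x y, Z n s x -> Z n s y ->
    Relation_Operators.clos_refl_trans (fact e) (nabla_edge n s) x y.

Definition Betti e (n : 'I_e -> nat) (s : nat) : Prop :=
  inS n s /\ ~ nabla_connected n s.

Definition inU_Betti e (n : 'I_e -> nat) (u : nat) : Prop :=
  Betti n u /\
  forall a b, Betti n a -> Betti n b -> leS n a u -> leS n b u ->
    leS n a b \/ leS n b a.

Definition LambdaU e (n : 'I_e -> nat) (u : nat) : set nat :=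
  [set b | Betti n b /\ leS n b u].

Definition Iso e (n : 'I_e -> nat) (t : nat) : set (fact e) :=
  [set z | Z n t z /\ forall x, Z n t x -> x <> z -> dot z x = 0].

Definition IsoL e (n : 'I_e -> nat) (L : set nat) : set (fact e) :=
  [set z | exists t, L t /\ Iso n t z].

Definition Isng e (n : 'I_e -> nat) : set (fact e) :=
  [set z | forall y : fact e, phi n y = phi n z -> y = z].

Definition Bset e (n : 'I_e -> nat) (s : nat) (L : set nat) : set (fact e) :=
  [set z | Z n s z /\ exists (w : fact e) (xs : seq (fact e)),
     Isng n w /\ (forall x, x \in xs -> IsoL n L x) /\ z = fadd w (fsum xs)].

Definition ncard (T : choiceType) (A : set T) : nat := #|` fset_set A|%fset.

From mathcomp Require Import all_boot all_order.
From mathcomp Require Import finmap.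
From mathcomp Require Import boolp classical_sets cardinality.
From mathcomp Require Import zify.
From Stdlib Require Import Relation_Operators.
Set Implicit Arguments. Unset Strict Implicit. Unset Printing Implicit Defensive.

(* The argument rests
   on two facts about isolated factorizations (Section Semigroup): a proper
   sub-vector of an isolated factorization has a unique factorization
   (Iso_sub_Isng), and isolated factorizations x of b and x' of a Betti element
   b' <=_S b have disjoint supports (Iso_orthogonal).
   Uniqueness (Section Decompositions): when L is a <=_S-chain of Betti
   elements, two decompositions w + x_1 + ... + x_t = w' + x'_1 + ... + x'_r
   share a summand of maximal phi-value, because such a summand is disjoint from
   all others and cannot sit below a uniquely factorizable w'; cancelling it and
   inducting gives w = w' and equal multisets of summands (decomp_unique).
   Counting (Section Counting): for Lambda = {b Betti : b <=_S u}, which is a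
   chain since u lies in U(Betti(S)), separating the summands of phi-value u
   yields a bijection between B(s; Lambda) and the pairs (y, c) with y in
   B(s - j u; Lambda \ {u}), 0 <= j <= q_s, and c a composition of j into
   i(u) parts (the multiplicities of the isolated factorizations of u); there
   are C(i(u) + j - 1, j) such compositions (Section ListCombinatorics). *)

Section FactorizationAlgebra.
Variable e : nat.
Implicit Types (x y z w : fact e) (xs ys : seq (fact e)).

Lemma faddE x y i : fadd x y i = x i + y i.
Proof. by rewrite /fadd ffunE. Qed.

Lemma fsumE xs i : fsum xs i = \sum_(x <- xs) x i.
Proof.
elim: xs => [|x xs IH] /=; first by rewrite /fzero ffunE big_nil.
by rewrite faddE IH big_cons.
Qed.

Lemma fsum_cat xs ys : fsum (xs ++ ys) = fadd (fsum xs) (fsum ys).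
Proof. by apply/ffunP => i; rewrite faddE !fsumE big_cat. Qed.

Lemma fsum_perm xs ys : perm_eq xs ys -> fsum xs = fsum ys.
Proof. by move=> pxy; apply/ffunP => i; rewrite !fsumE; apply: perm_big. Qed.

Lemma faddA x y z : fadd x (fadd y z) = fadd (fadd x y) z.
Proof. by apply/ffunP => i; rewrite !faddE addnA. Qed.

Lemma faddC x y : fadd x y = fadd y x.
Proof. by apply/ffunP => i; rewrite !faddE addnC. Qed.

Lemma fadd0 x : fadd x (fzero e) = x.
Proof. by apply/ffunP => i; rewrite faddE /fzero ffunE addn0. Qed.

Lemma faddI x : injective (fadd x).
Proof. by move=> y z /ffunP exy; apply/ffunP => i; move: (exy i); rewrite !faddE => /addnI. Qed.

Definition lef x y := forall i, x i <= y i.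
Definition fsub x y : fact e := [ffun i => y i - x i].

Lemma fadd_sub x y : lef x y -> fadd x (fsub x y) = y.
Proof. by move=> lexy; apply/ffunP => i; rewrite faddE ffunE subnKC. Qed.

Lemma lef_fsum x w xs : x \in xs -> lef x (fadd w (fsum xs)).
Proof.
move=> xs_x i; rewrite (fsum_perm (perm_to_rem xs_x)) /= !faddE.
by rewrite addnCA leq_addr.
Qed.

Lemma dot_ge x y i : x i * y i <= dot x y.
Proof. by rewrite /dot (bigD1 i) //= leq_addr. Qed.

Lemma dot_mono x y y' : lef y y' -> dot x y <= dot x y'.
Proof. by move=> leyy'; apply: leq_sum => i _; rewrite leq_mul2l leyy' orbT. Qed.

End FactorizationAlgebra.

Section Semigroup.
Variables (e : nat) (n : 'I_e -> nat).
Implicit Types (x y w : fact e) (xs : seq (fact e)).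

Lemma phi_add x y : phi n (fadd x y) = phi n x + phi n y.
Proof. by rewrite /phi -big_split; apply: eq_bigr => i _; rewrite faddE mulnDl. Qed.

Lemma phi_zero : phi n (fzero e) = 0.
Proof. by rewrite /phi big1 // => i _; rewrite /fzero ffunE. Qed.

Lemma phi_fsum_const xs u : (forall x, x \in xs -> phi n x = u) ->
  phi n (fsum xs) = size xs * u.
Proof.
elim: xs => [|x xs IH] phi_xs /=; first by rewrite phi_zero.
rewrite phi_add phi_xs ?mem_head // IH // => y xs_y.
by apply: phi_xs; rewrite inE xs_y orbT.
Qed.

Lemma inS_add a b : inS n a -> inS n b -> inS n (a + b).
Proof. by move=> [x <-] [y <-]; exists (fadd x y); rewrite phi_add. Qed.

Lemma leS_refl a : leS n a a.
Proof. by split => //; rewrite subnn; exists (fzero e); rewrite phi_zero. Qed.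

Lemma leS_trans a b c : leS n a b -> leS n b c -> leS n a c.
Proof.
move=> [leab Sab] [lebc Sbc]; split; first exact: leq_trans lebc.
have -> : c - a = (b - a) + (c - b) by lia.
exact: inS_add.
Qed.

(* Uniquely factorizable elements are closed downwards: if phi(y) had another
   factorization y', then y' + (w - y) would be another one of phi(w). *)
Lemma Isng_le w y : Isng n w -> lef y w -> Isng n y.
Proof.
move=> sing_w leyw y' phiy'.
have := sing_w (fadd y' (fsub y w)).
rewrite phi_add phiy' -phi_add fadd_sub // => /(_ erefl) /ffunP eqw.
apply/ffunP => i; move: (eqw i) (leyw i); rewrite faddE ffunE.
by move: (y' i) (y i) (w i) => a b c; lia.
Qed.

(* A Betti element has a disconnected graph, hence at least two factorizations. *)
Lemma Betti_notIsng t x : Betti n t -> Z n t x -> ~ Isng n x.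
Proof.
move=> [_ disc] Zx sing_x; apply: disc => a b Za Zb.
have -> : a = x by apply: sing_x; rewrite Za Zx.
have -> : b = x by apply: sing_x; rewrite Zb Zx.
exact: rt_refl.
Qed.

(* A proper sub-vector y of an isolated factorization x is uniquely
   factorizable: another factorization y' of phi(y) would give the factorization
   y' + (x - y) of phi(x), distinct from x yet sharing its support where y < x. *)
Lemma Iso_sub_Isng t x y : Iso n t x -> lef y x -> y <> x -> Isng n y.
Proof.
move=> [Zx iso_x] leyx neyx y' phiy'.
pose x2 := fadd y' (fsub y x).
have Zx2 : Z n t x2 by rewrite /Z /= /x2 phi_add phiy' -phi_add fadd_sub.
have [ex2x|nex2x] := eqVneq x2 x.
  apply/ffunP => i; move/ffunP: ex2x => /(_ i); move: (leyx i).
  by rewrite /x2 faddE ffunE; move: (y' i) (y i) (x i) => a b c; lia.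
have [i ltyx] : exists i, y i < x i.
  apply/existsP; apply: contra_notT neyx => /existsPn geyx.
  by apply/ffunP => i; apply/eqP; rewrite eqn_leq leyx leqNgt geyx.
have := dot_ge x x2 i; rewrite iso_x //; last exact/eqP.
rewrite leqn0 muln_eq0 /x2 faddE ffunE; move: ltyx.
by move: (y' i) (y i) (x i) => a b c ltbc /orP[] /eqP zero; exfalso; lia.
Qed.

(* Isolated factorizations x of b and x' of a Betti element b' <=_S b are
   disjoint: otherwise x' + f (f a factorization of b - b') would be a
   factorization of b meeting x, so it equals x and x' is a proper sub-vector
   of x, contradicting the previous lemma. *)
Lemma Iso_orthogonal b b' x x' : Betti n b' -> Iso n b x -> Iso n b' x' ->
  leS n b' b -> x' <> x -> dot x x' = 0.
Proof.
move=> Betti_b' Ix Ix' [leb'b [f phif]] nex'x.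
pose x2 := fadd x' f.
have Zx2 : Z n b x2 by rewrite /Z /= /x2 phi_add phif (proj1 Ix'); lia.
have [ex2x|nex2x] := eqVneq x2 x.
  have lex'x : lef x' x by move=> i; rewrite -ex2x /x2 faddE leq_addr.
  by case: (Betti_notIsng Betti_b' (proj1 Ix') (Iso_sub_Isng Ix lex'x nex'x)).
apply/eqP; rewrite -leqn0 -((proj2 Ix) _ Zx2 (elimN eqP nex2x)).
by apply: dot_mono => i; rewrite /x2 faddE leq_addr.
Qed.

Lemma exists_leS_max xs : xs != [::] ->
  (forall a b, a \in xs -> b \in xs -> leS n (phi n a) (phi n b) \/ leS n (phi n b) (phi n a)) ->
  exists2 x, x \in xs & forall y, y \in xs -> leS n (phi n y) (phi n x).
Proof.
elim: xs => [//|a [|b xs] IH] _ cmp.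
  by exists a; rewrite ?mem_head // => y; rewrite inE => /eqP ->; apply: leS_refl.
have [|x xs_x xmax] := IH erefl.
  by move=> a1 b1 xs_a1 xs_b1; apply: cmp; rewrite inE ?xs_a1 ?xs_b1 orbT.
have xs'_x : x \in [:: a, b & xs] by rewrite inE xs_x orbT.
have [leax|lexa] := cmp a x (mem_head _ _) xs'_x.
  exists x => // y.
  by rewrite inE => /orP [/eqP ->|/xmax].
exists a; first exact: mem_head.
move=> y; rewrite inE => /orP [/eqP ->|/xmax leyx]; first exact: leS_refl.
exact: leS_trans leyx lexa.
Qed.

End Semigroup.

Section Decompositions.
Variables (e : nat) (n : 'I_e -> nat) (L : set nat).
Hypothesis L_Betti : forall t, L t -> Betti n t.
Hypothesis L_chain : forall t t', L t -> L t' -> leS n t t' \/ leS n t' t.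
Implicit Types (x w : fact e) (xs : seq (fact e)).

(* If x in I(L) has phi-value maximal among the summands x'_j of a
   decomposition w' + sum x'_j lying above x, then x is one of the x'_j:
   otherwise x is disjoint from all of them, so x <= w', and the Betti element
   phi(x) would have a unique factorization. *)
Lemma Iso_max_mem x w' xs' : Isng n w' -> (forall x', x' \in xs' -> IsoL n L x') ->
  IsoL n L x -> (forall x', x' \in xs' -> leS n (phi n x') (phi n x)) ->
  lef x (fadd w' (fsum xs')) -> x \in xs'.
Proof.
move=> sing_w' iso_xs' [t [Lt Ix]] xmax lex; apply/idPn => xs'Nx.
have disj x' : x' \in xs' -> dot x x' = 0.
  move=> xs'_x'; have [t' [Lt' Ix']] := iso_xs' x' xs'_x'.
  apply: (Iso_orthogonal (L_Betti Lt') Ix Ix').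
    by have := xmax x' xs'_x'; rewrite (proj1 Ix') (proj1 Ix).
  by move=> ex'x; move: xs'Nx; rewrite -ex'x xs'_x'.
have lexw' : lef x w'.
  move=> i; have := lex i; rewrite faddE fsumE.
  have [->//|xi_neq0] := eqVneq (x i) 0.
  rewrite big1_seq ?addn0 // => x' /andP[_ xs'_x'].
  by have := dot_ge x x' i; rewrite disj // leqn0 muln_eq0 (negbTE xi_neq0) => /eqP.
exact: Betti_notIsng (L_Betti Lt) (proj1 Ix) (Isng_le sing_w' lexw').
Qed.

(* Two decompositions of the same vector with some summand share a summand:
   one of maximal phi-value (phi-values of summands lie in the chain L). *)
Lemma shared_summand w w' xs xs' :
  Isng n w -> (forall x, x \in xs -> IsoL n L x) ->
  Isng n w' -> (forall x, x \in xs' -> IsoL n L x) ->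
  fadd w (fsum xs) = fadd w' (fsum xs') -> xs ++ xs' != [::] ->
  exists2 x, x \in xs & x \in xs'.
Proof.
move=> sing_w iso_xs sing_w' iso_xs' exs nonempty.
have iso_all x : x \in xs ++ xs' -> IsoL n L x.
  by rewrite mem_cat => /orP [/iso_xs|/iso_xs'].
have [|x all_x xmax] := exists_leS_max (n := n) nonempty.
  move=> a b /iso_all [ta [La Ia]] /iso_all [tb [Lb Ib]].
  by rewrite (proj1 Ia) (proj1 Ib); apply: L_chain.
have lex : lef x (fadd w (fsum xs)).
  by move: all_x; rewrite mem_cat => /orP[] ?; [|rewrite exs]; apply: lef_fsum.
exists x.
- apply: (Iso_max_mem sing_w iso_xs (iso_all x all_x) _ lex) => y xs_y.
  by apply: xmax; rewrite mem_cat xs_y.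
- apply: (Iso_max_mem sing_w' iso_xs' (iso_all x all_x)); last by rewrite -exs.
  by move=> y xs'_y; apply: xmax; rewrite mem_cat xs'_y orbT.
Qed.

Lemma decomp_unique w w' xs xs' :
  Isng n w -> (forall x, x \in xs -> IsoL n L x) ->
  Isng n w' -> (forall x, x \in xs' -> IsoL n L x) ->
  fadd w (fsum xs) = fadd w' (fsum xs') -> w = w' /\ perm_eq xs xs'.
Proof.
have [k] := ubnP (size xs); elim: k => // k IH in xs xs' *.
move=> size_xs sing_w iso_xs sing_w' iso_xs' exs.
have [/nilP|nonempty] := eqVneq (xs ++ xs') [::].
  rewrite /nilp size_cat addn_eq0 => /andP[/nilP xs0 /nilP xs'0].
  by move: exs; rewrite xs0 xs'0 /= !fadd0.
have [x xs_x xs'_x] := shared_summand sing_w iso_xs sing_w' iso_xs' exs nonempty.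
have rem_xs := perm_to_rem xs_x; have rem_xs' := perm_to_rem xs'_x.
move: exs; rewrite (fsum_perm rem_xs) (fsum_perm rem_xs') /=.
rewrite !faddA (faddC w x) (faddC w' x) -!faddA => /faddI exs.
have size_rem : size (rem x xs) < k.
  by move: size_xs; rewrite size_rem // ltnS; case: (xs) xs_x.
have iso_rem y : y \in rem x xs -> IsoL n L y by move/mem_rem/iso_xs.
have iso_rem' y : y \in rem x xs' -> IsoL n L y by move/mem_rem/iso_xs'.
have [-> perm_rem] := IH _ _ size_rem sing_w iso_rem sing_w' iso_rem' exs.
split => //.
by rewrite (perm_trans rem_xs) // perm_sym (perm_trans rem_xs') // perm_cons perm_sym.
Qed.

End Decompositions.

Section ListCombinatorics.

Lemma uniq_flatten_map (S T : eqType) (g : S -> seq T) (s : seq S) :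
  uniq s -> (forall i, i \in s -> uniq (g i)) ->
  (forall i i' x, i \in s -> i' \in s -> x \in g i -> x \in g i' -> i = i') ->
  uniq (flatten (map g s)).
Proof.
elim: s => [//|a s IH] /= /andP[sNa uniq_s] uniq_g disj.
rewrite cat_uniq uniq_g ?mem_head //= IH //; first last.
- by move=> i i' x s_i s_i'; apply: disj; rewrite inE ?s_i ?s_i' orbT.
- by move=> i s_i; apply: uniq_g; rewrite inE s_i orbT.
rewrite andbT; apply/hasPn => x /flatten_mapP [i s_i gi_x]; apply/negP => ga_x.
have s'_i : i \in a :: s by rewrite inE s_i orbT.
by move: sNa; rewrite (disj a i x (mem_head _ _) s'_i ga_x gi_x) s_i.
Qed.

Lemma size_flatten_map (S T : Type) (g : S -> seq T) (s : seq S) :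
  size (flatten (map g s)) = \sum_(i <- s) size (g i).
Proof. by elim: s => [|a s IH] /=; rewrite ?big_nil ?big_cons // size_cat IH. Qed.

Fixpoint compositions (m j : nat) : seq (seq nat) :=
  if m is m'.+1 then
    flatten [seq [seq (j - i) :: c | c <- compositions m' i] | i <- iota 0 j.+1]
  else if j == 0 then [:: [::]] else [::].

Lemma compositionsS m j : compositions m.+1 j =
  flatten [seq [seq (j - i) :: c | c <- compositions m i] | i <- iota 0 j.+1].
Proof. by []. Qed.

Lemma mem_compositions m j c :
  (c \in compositions m j) = (size c == m) && (sumn c == j).
Proof.
elim: m j c => [|m IH] j c.
  by case: j => [|j]; case: c => [|a c] //=; rewrite inE.
rewrite compositionsS; apply/idP/idP.
  move/flatten_mapP => [i iota_i /mapP [c' comp_c' ->]].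
  move: comp_c'; rewrite IH /= => /andP[/eqP-> /eqP->].
  by move: iota_i; rewrite mem_iota add0n ltnS /= => leij; rewrite subnK // !eqxx.
case: c => [//|a c] /andP[size_c /eqP sum_c]; rewrite /= in size_c sum_c.
apply/flatten_mapP; exists (sumn c).
  by rewrite mem_iota add0n ltnS -sum_c leq_addl.
apply/mapP; exists c; first by rewrite IH -(eqSS (size c)) size_c eqxx.
by rewrite -sum_c addnK.
Qed.

Lemma uniq_compositions m j : uniq (compositions m j).
Proof.
elim: m j => [|m IH] j; first by case: j.
apply: uniq_flatten_map; first exact: iota_uniq.
  by move=> i _; rewrite map_inj_uniq // => c1 c2 [].
move=> i i' x _ _ /mapP [c comp_c ->] /mapP [c' comp_c' [_ ecc']].
by move: comp_c comp_c'; rewrite !mem_compositions ecc' => /andP[_ /eqP <-] /andP[_ /eqP <-].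
Qed.

Lemma sum_multiset_coef m j :
  \sum_(0 <= i < j.+1) 'C(m + i - 1, i) = 'C(m + j, j).
Proof.
elim: j => [|j IH]; first by rewrite big_nat1 !bin0.
by rewrite big_nat_recr //= IH addnS subn1 /= binS addnC.
Qed.

Lemma size_compositions m j : size (compositions m j) = 'C(m + j - 1, j).
Proof.
elim: m j => [|m IH] j.
  by case: j => [|j] //=; rewrite add0n subn1 /= bin_small.
rewrite compositionsS size_flatten_map.
under eq_bigr => i _ do rewrite size_map IH.
by rewrite addSn subn1 /= -sum_multiset_coef /index_iota subn0.
Qed.

Section Expand.
Variable T : eqType.

(* expand c L repeats the i-th item of L exactly c_i times: it realizes the
   multiset on the items of L with multiplicity vector c. *)
Fixpoint expand (c : seq nat) (L : seq T) : seq T :=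
  if (c, L) is (k :: c', a :: L') then nseq k a ++ expand c' L' else [::].

Lemma mem_expand c L x : x \in expand c L -> x \in L.
Proof.
elim: L c => [|a L IH] [|k c] //=.
by rewrite mem_cat inE => /orP [/nseqP [-> _]|/IH ->]; rewrite ?eqxx ?orbT.
Qed.

Lemma size_expand c L : size c = size L -> size (expand c L) = sumn c.
Proof. by elim: L c => [|a L IH] [|k c] //= [size_c]; rewrite size_cat size_nseq IH. Qed.

Lemma count_expand c L x : uniq L -> size c = size L -> x \in L ->
  count_mem x (expand c L) = nth 0 c (index x L).
Proof.
elim: L c => [|a L IH] [|k c] //= /andP[LNa uniq_L] [size_c].
rewrite inE count_cat count_nseq /=; case: eqVneq => [eax|neax] /= L_x.
  subst a; rewrite (count_memPn _) ?mul1n ?addn0 //.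
  by apply: contra LNa; apply: mem_expand.
by rewrite mul0n add0n IH //; rewrite eq_sym (negPf neax) in L_x.
Qed.

Lemma expand_count L l : uniq L -> {subset l <= L} ->
  perm_eq (expand [seq count_mem a l | a <- L] L) l.
Proof.
move=> uniq_L sub_lL; apply/allP => x _ /=; apply/eqP.
have [L_x|LNx] := boolP (x \in L).
  by rewrite count_expand ?size_map // (nth_map x) ?index_mem // nth_index.
rewrite !(count_memPn _) //; apply: contra LNx; [exact: sub_lL | exact: mem_expand].
Qed.

Lemma expand_inj L c c' : uniq L -> size c = size L -> size c' = size L ->
  perm_eq (expand c L) (expand c' L) -> c = c'.
Proof.
case: L => [|x0 L'] uniq_L size_c size_c' /permP pcc'.
  by move: size_c size_c' => /size0nil -> /size0nil ->.
apply: (@eq_from_nth _ 0); first by rewrite size_c size_c'.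
move=> k lt_kc; have lt_kL : k < size (x0 :: L') by rewrite -size_c.
have := pcc' (pred1 (nth x0 (x0 :: L') k)).
by rewrite !count_expand ?mem_nth // index_uniq.
Qed.

End Expand.

Lemma mem_fset_setP (T : choiceType) (A : set T) x :
  finite_set A -> x \in fset_set A <-> A x.
Proof. by move=> finA; rewrite in_fset_set // inE. Qed.

Lemma ncard_seq (T : choiceType) (A : set T) (l : seq T) : uniq l ->
  (forall x, A x <-> x \in l) -> ncard A = size l.
Proof.
move=> uniq_l Al.
have -> : A = [set` l]%classic by apply/seteqP; split => x /= /Al.
rewrite /ncard; apply: perm_size; apply: uniq_perm => // x.
by rewrite in_fset_set //; apply/idP/idP => [/set_mem //|l_x]; exact: mem_set.
Qed.

End ListCombinatorics.

Section Counting.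
Variables (e : nat) (n : 'I_e -> nat) (u : nat).
Hypothesis gens : numsg_mingens n.
Hypothesis u_U : inU_Betti n u.
Local Notation Lam := (LambdaU n u).
Local Notation Lam' := (LambdaU n u `\ u)%classic.

(* Minimal generators are positive (0 is the empty sum), so the entries of a
   factorization of t are at most t and Z(t) is finite. *)
Lemma gen_pos i : 0 < n i.
Proof.
rewrite lt0n; apply/negP => /eqP ni0; apply: (proj2 gens i); exists (fzero e).
by split; [rewrite /fzero ffunE | rewrite phi_zero ni0].
Qed.

Lemma coord_le_phi (x : fact e) i : x i <= phi n x.
Proof.
rewrite /phi (bigD1 i) //=; apply: leq_trans (leq_addr _ _).
by rewrite leq_pmulr // gen_pos.
Qed.

Lemma finite_Z t : finite_set (Z n t).
Proof.
pose val_fun (f : {ffun 'I_e -> 'I_t.+1}) : fact e := [ffun i => val (f i)].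
apply: (@sub_finite_set _ _ (val_fun @` setT)%classic).
  move=> x Zx; exists [ffun i => inord (x i)] => //.
  apply/ffunP => i; rewrite /val_fun !ffunE; apply: inordK.
  by rewrite ltnS -[t]Zx coord_le_phi.
by apply: finite_image; exact: finite_finset.
Qed.

Lemma Lam_Betti t : Lam t -> Betti n t.
Proof. by case. Qed.

Lemma Lam_u : Lam u.
Proof. by split; [exact: (proj1 u_U) | exact: leS_refl]. Qed.

Lemma IsoL_Lam' x : IsoL n Lam' x -> IsoL n Lam x.
Proof. by move=> [t [[Lt _] Ix]]; exists t. Qed.

Lemma IsoL_u x : Iso n u x -> IsoL n Lam x.
Proof. by exists u; split => //; exact: Lam_u. Qed.

Lemma Lam_chain t t' : Lam t -> Lam t' -> leS n t t' \/ leS n t' t.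
Proof. by move=> [Bt ltu] [Bt' lt'u]; apply: (proj2 u_U). Qed.

Definition isoU : seq (fact e) := fset_set (Iso n u).
Definition Bseq t : seq (fact e) := fset_set (Bset n t Lam').

(* Both enumerations are exact, since Z(t) is finite. *)
Lemma mem_isoU x : x \in isoU <-> Iso n u x.
Proof. by apply: mem_fset_setP; apply: sub_finite_set (finite_Z u) => y []. Qed.

Lemma mem_Bseq t y : y \in Bseq t <-> Bset n t Lam' y.
Proof. by apply: mem_fset_setP; apply: sub_finite_set (finite_Z t) => z []. Qed.

Definition attach (y : fact e) (c : seq nat) : fact e :=
  fadd y (fsum (expand c isoU)).

Lemma Iso_expand c x : x \in expand c isoU -> Iso n u x.
Proof. by move/mem_expand/mem_isoU. Qed.

Lemma phi_expand c : size c = size isoU -> phi n (fsum (expand c isoU)) = sumn c * u.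
Proof.
by move=> size_c; rewrite (phi_fsum_const (u := u)) ?size_expand // => x /Iso_expand [].
Qed.

(* Summands that are isolated factorizations of u are exactly those of phi-value u. *)
Definition at_u (x : fact e) : bool := phi n x == u.

Lemma filter_at_u (A B : seq (fact e)) :
  (forall x, x \in A -> IsoL n Lam' x) -> (forall x, x \in B -> Iso n u x) ->
  filter at_u (A ++ B) = B /\ filter (predC at_u) (A ++ B) = A.
Proof.
move=> isoA isoB.
have A_Nat x : x \in A -> ~~ at_u x.
  by move=> /isoA [t [[Lt /eqP neq_tu] [Zx _]]]; rewrite /at_u Zx.
have B_at x : x \in B -> at_u x by move=> /isoB [Zx _]; rewrite /at_u Zx.
rewrite !filter_cat; split.
  rewrite (eq_in_filter (a2 := pred0) (s := A)) ?filter_pred0; last first.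
    by move=> x /A_Nat/negPf.
  by apply/all_filterP/allP; exact: B_at.
rewrite (eq_in_filter (a2 := pred0) (s := B)) ?filter_pred0 ?cats0; last first.
  by move=> x /B_at /= ->.
by apply/all_filterP/allP; exact: A_Nat.
Qed.

(* attach is injective on B(t; Lambda \ {u}) x (multiplicity vectors): by the
   uniqueness of decompositions, the summands of phi-value u are determined. *)
Lemma attach_inj t t' y y' c c' : Bset n t Lam' y -> Bset n t' Lam' y' ->
  size c = size isoU -> size c' = size isoU ->
  attach y c = attach y' c' -> y = y' /\ c = c'.
Proof.
move=> [_ [w [xs [sing_w [iso_xs ey]]]]] [_ [w' [xs' [sing_w' [iso_xs' ey']]]]].
move=> size_c size_c' eatt.
have iso_all (ys : seq (fact e)) d : (forall x, x \in ys -> IsoL n Lam' x) ->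
    forall x, x \in ys ++ expand d isoU -> IsoL n Lam x.
  move=> iso_ys x; rewrite mem_cat => /orP [/iso_ys/IsoL_Lam' //|/Iso_expand].
  exact: IsoL_u.
have [ew perm_all] : w = w' /\ perm_eq (xs ++ expand c isoU) (xs' ++ expand c' isoU).
  apply: (decomp_unique Lam_Betti Lam_chain sing_w (iso_all _ _ iso_xs) sing_w').
    exact: iso_all.
  by rewrite !fsum_cat !faddA -ey -ey'.
have [at_c Nat_xs] := filter_at_u iso_xs (@Iso_expand c).
have [at_c' Nat_xs'] := filter_at_u iso_xs' (@Iso_expand c').
have perm_c := perm_filter at_u perm_all; rewrite at_c at_c' in perm_c.
have perm_xs := perm_filter (predC at_u) perm_all; rewrite Nat_xs Nat_xs' in perm_xs.
split; last exact: expand_inj (fset_uniq _) size_c size_c' perm_c.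
by rewrite ey ey' ew (fsum_perm perm_xs).
Qed.

Lemma attach_in s j y c : j * u <= s -> Bset n (s - j * u) Lam' y ->
  c \in compositions (size isoU) j -> Bset n s Lam (attach y c).
Proof.
move=> leju [Zy [w [xs [sing_w [iso_xs ey]]]]].
rewrite mem_compositions => /andP [/eqP size_c /eqP sum_c].
have phi_y : phi n y = s - j * u := Zy.
split; first by rewrite /Z /= /attach phi_add phi_expand // sum_c phi_y subnK.
exists w, (xs ++ expand c isoU); split => //; split; last first.
  by rewrite /attach ey fsum_cat faddA.
move=> x; rewrite mem_cat => /orP [/iso_xs/IsoL_Lam' //|/Iso_expand].
exact: IsoL_u.
Qed.

(* Conversely, every z in B(s; Lambda) arises in this way: split its summands
   into those of phi-value u (j of them, with j u <=_S s) and the others. *)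
Lemma attach_surj s q z : (forall j, leS n (j * u) s -> j <= q) ->
  Bset n s Lam z -> exists j y c, [/\ j <= q, Bset n (s - j * u) Lam' y,
    c \in compositions (size isoU) j & z = attach y c].
Proof.
move=> q_max [Zz [w [xs [sing_w [iso_xs ez]]]]].
pose xu := filter at_u xs; pose xo := filter (predC at_u) xs.
pose j := size xu; pose c := [seq count_mem a xu | a <- isoU].
pose y := fadd w (fsum xo).
have isoU_xu : {subset xu <= isoU}.
  move=> x; rewrite mem_filter => /andP [/eqP phix /iso_xs [t [Lt Ix]]]; apply/mem_isoU.
  by rewrite -phix (proj1 Ix).
have perm_xu : perm_eq (expand c isoU) xu := expand_count (fset_uniq _) isoU_xu.
have ez' : z = attach y c.
  rewrite /attach (fsum_perm perm_xu) ez /y -faddA; congr fadd.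
  rewrite faddC -fsum_cat; apply: fsum_perm; rewrite perm_sym.
  by rewrite /xu /xo (perm_filterC at_u xs).
have phi_y : phi n y + j * u = s.
  have phi_xu : phi n (fsum xu) = j * u.
    by apply: phi_fsum_const => x; rewrite mem_filter => /andP [/eqP].
  rewrite -phi_xu -phi_add -[s]Zz ez' /attach; congr phi.
  by rewrite (fsum_perm perm_xu).
exists j, y, c; split.
- by apply: q_max; split; [rewrite -phi_y leq_addl | exists y; lia].
- split; first by rewrite /Z /=; lia.
  exists w, xo; split => //; split => // x.
  rewrite mem_filter => /andP [Nat_x /iso_xs [t [Lt Ix]]].
  exists t; split => //; split => // etu; move: Nat_x.
  by rewrite /= /at_u (proj1 Ix) etu eqxx.
- rewrite mem_compositions size_map eqxx /= -(size_expand (L := isoU)) ?size_map //.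
  by rewrite (perm_size perm_xu).
- exact: ez'.
Qed.

Definition Benum s q : seq (fact e) :=
  flatten [seq [seq attach y c | y <- Bseq (s - j * u), c <- compositions (size isoU) j]
          | j <- iota 0 q.+1].

(* Distinct triples (j, y, c) give distinct vectors: attach_inj recovers y
   and c, and j is the sum of c. *)
Lemma uniq_Benum s q : uniq (Benum s q).
Proof.
have inj j j' y y' c c' : y \in Bseq (s - j * u) -> y' \in Bseq (s - j' * u) ->
    c \in compositions (size isoU) j -> c' \in compositions (size isoU) j' ->
    attach y c = attach y' c' -> [/\ j = j', y = y' & c = c'].
  move=> /mem_Bseq By /mem_Bseq By'; rewrite !mem_compositions.
  move=> /andP[/eqP size_c /eqP sum_c] /andP[/eqP size_c' /eqP sum_c'] eatt.
  have [-> ecc'] := attach_inj By By' size_c size_c' eatt.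
  by split => //; rewrite -sum_c -sum_c' ecc'.
apply: uniq_flatten_map; first exact: iota_uniq.
  move=> j _; apply: allpairs_uniq; [exact: fset_uniq | exact: uniq_compositions |].
  move=> [y c] [y' c'] /allpairsP [[y1 c1] [/= B1 C1 [-> ->]]].
  move=> /allpairsP [[y2 c2] [/= B2 C2 [-> ->]]] /= eatt.
  by have [_ -> ->] := inj _ _ _ _ _ _ B1 B2 C1 C2 eatt.
move=> j j' x _ _ /allpairsP [[y1 c1] [/= B1 C1 ->]] /allpairsP [[y2 c2] [/= B2 C2 eatt]].
by have [] := inj _ _ _ _ _ _ B1 B2 C1 C2 eatt.
Qed.

Lemma mem_Benum s q : q * u <= s -> (forall j, leS n (j * u) s -> j <= q) ->
  forall z, Bset n s Lam z <-> z \in Benum s q.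
Proof.
move=> le_qu_s q_max z; split.
  move=> Bz; have [j [y [c [le_jq By comp_c ->]]]] := attach_surj q_max Bz.
  apply/flatten_mapP; exists j; first by rewrite mem_iota add0n ltnS.
  by apply/allpairsP; exists (y, c); split => //; apply/mem_Bseq.
move=> /flatten_mapP [j iota_j /allpairsP [[y c] [/= By comp_c ->]]].
move: iota_j; rewrite mem_iota add0n ltnS /= => le_jq.
apply: attach_in comp_c; last exact/mem_Bseq.
by apply: leq_trans le_qu_s; rewrite leq_mul2r le_jq orbT.
Qed.

Lemma size_Benum s q : size (Benum s q) =
  \sum_(0 <= j < q.+1) ncard (Bset n (s - j * u) Lam') * 'C(ncard (Iso n u) + j - 1, j).
Proof.
rewrite size_flatten_map /index_iota subn0; apply: eq_bigr => j _.
by rewrite size_allpairs size_compositions.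
Qed.

End Counting.

Theorem lemma5p14 (e : nat) (n : 'I_e -> nat) (u : nat) :
  numsg_mingens n -> inU_Betti n u ->
  (forall s : nat, inS n s -> forall z : fact e, Bset n s (LambdaU n u) z ->
     (exists (w : fact e) (xs : seq (fact e)),
        Isng n w /\ (forall x, x \in xs -> IsoL n (LambdaU n u) x) /\
        z = fadd w (fsum xs)) /\
     (forall (w w' : fact e) (xs xs' : seq (fact e)),
        Isng n w -> (forall x, x \in xs -> IsoL n (LambdaU n u) x) ->
        z = fadd w (fsum xs) ->
        Isng n w' -> (forall x, x \in xs' -> IsoL n (LambdaU n u) x) ->
        z = fadd w' (fsum xs') ->
        w = w' /\ perm_eq xs xs')) /\
  (forall (s : nat) (q : nat), inS n s ->
     leS n (q * u) s -> (forall j, leS n (j * u) s -> j <= q) ->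
     ncard (Bset n s (LambdaU n u)) =
     \sum_(0 <= j < q.+1)
        ncard (Bset n (s - j * u) (LambdaU n u `\ u)) *
        'C(ncard (Iso n u) + j - 1, j)).
Proof.
move=> gens u_U; split.
  move=> s _ z [_ decz]; split => // w w' xs xs' sing_w iso_xs -> sing_w' iso_xs'.
  exact: (decomp_unique (@Lam_Betti e n u) (Lam_chain u_U)).
move=> s q _ [le_qu_s _] q_max.
rewrite (ncard_seq (uniq_Benum gens u_U s q) (mem_Benum gens u_U le_qu_s q_max)).
exact: size_Benum.
Qed.
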